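(* Let $a_1,\dots,a_n,b_1,\dots,b_m\in\Sigma_M$, and let $\tau$ be a shuffle (interleaving) of the action sequence $!?a_1\cdots !?a_n$ with the action sequence $!?b_1\cdots !?b_m$. Then for every peer $i\in\{1,\dots,N\}$ there is a shuffle $c_1\cdots c_{n+m}$ of the word $a_1\cdots a_n$ with the word $b_1\cdots b_m$ such that $\pi_i(\tau)=\pi_i(!?c_1\cdots !?c_{n+m})$.
   Context: A message set $M=(\Sigma_M,N,\mathrm{src},\mathrm{dst})$ consists of a finite set $\Sigma_M$ of messages, $N\ge1$ peers and maps $\mathrm{src},\mathrm{dst}:\Sigma_M\to\{1,\dots,N\}$ with $\mathrm{src}(a)\neq\mathrm{dst}(a)$. Actions are $!a$ (performed by peer $\mathrm{src}(a)$) and $?a$ (performed by peer $\mathrm{dst}(a)$); $!?a$ abbreviates $!a\cdot ?a$. For a finite sequence of actions $\tau$, $\pi_i(\tau)$ is the subsequence of actions of $\tau$ performed by peer $i$. *)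

From mathcomp Require Import all_boot.
Set Implicit Arguments. Unset Strict Implicit. Unset Printing Implicit Defensive.

Definition msgset (Msg : finType) (N : nat) (src dst : Msg -> nat) : Prop :=
  1 <= N /\
  forall a : Msg, [/\ 1 <= src a <= N, 1 <= dst a <= N & src a <> dst a].

Inductive action (Msg : Type) : Type :=
| Snd of Msg
| Rcv of Msg.

Definition actor (Msg : Type) (src dst : Msg -> nat) (x : action Msg) : nat :=
  match x with Snd a => src a | Rcv a => dst a end.

Definition proj (Msg : Type) (src dst : Msg -> nat) (i : nat) (tau : seq (action Msg))
  : seq (action Msg) :=
  filter (fun x => actor src dst x == i) tau.

Definition sndrcv (Msg : Type) (w : seq Msg) : seq (action Msg) :=
  flatten (map (fun a => [:: Snd a; Rcv a]) w).

Inductive shuffle (T : Type) : seq T -> seq T -> seq T -> Prop :=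
| shuffle_nil : shuffle [::] [::] [::]
| shuffle_l x u v w : shuffle u v w -> shuffle (x :: u) v (x :: w)
| shuffle_r x u v w : shuffle u v w -> shuffle u (x :: v) (x :: w).

From mathcomp Require Import all_boot.

Set Implicit Arguments.
Unset Strict Implicit.
Unset Printing Implicit Defensive.

(* Peer i's view of !?a is !a, ?a or nothing, according as i = src a, i = dst a
   or neither (never both, since src a <> dst a).  Hence pi_i(!?w) is a
   letter-wise image [pmap] of w, projection commutes with shuffling, and a
   shuffle of two such images lifts back to a shuffle of the words, the
   letters invisible to peer i being placed anywhere. *)

Section Shuffle.

Variable T : Type.

Lemma shuffle0s (v : seq T) : shuffle [::] v v.
Proof. by elim: v => [|y v IH]; [exact: shuffle_nil | exact: shuffle_r]. Qed.

Lemma shuffle_catl (p u v w : seq T) :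
  shuffle u v w -> shuffle (p ++ u) v (p ++ w).
Proof. by elim: p => [|x p IH] //= /IH; exact: shuffle_l. Qed.

Lemma shuffle_catr (p u v w : seq T) :
  shuffle u v w -> shuffle u (p ++ v) (p ++ w).
Proof. by elim: p => [|y p IH] //= /IH; exact: shuffle_r. Qed.

Lemma shuffle_cat (u v : seq T) : shuffle u v (u ++ v).
Proof. by rewrite -[u in shuffle u]cats0; apply/shuffle_catl/shuffle0s. Qed.

Lemma shuffle_filter (p : pred T) (u v w : seq T) :
  shuffle u v w -> shuffle (filter p u) (filter p v) (filter p w).
Proof.
elim=> [|x {}u {}v {}w _ IH|x {}u {}v {}w _ IH] /=; first exact: shuffle_nil.
  by case: (p x) => //; exact: shuffle_l.
by case: (p x) => //; exact: shuffle_r.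
Qed.

Variables (A : Type) (g : T -> option A).

Lemma pmap_eq_cons (u : seq T) (x : A) (s : seq A) :
  pmap g u = x :: s ->
  exists u1 a u2, [/\ u = u1 ++ a :: u2, pmap g u1 = [::], g a = Some x
                    & pmap g u2 = s].
Proof.
elim: u => [|b u IH] //=; case Hb: (g b) => [y|] /=.
  by case=> <- <-; exists [::], b, u.
move=> /IH [u1 [a [u2 [-> Hu1 Ha Hu2]]]].
by exists (b :: u1), a, u2; rewrite /= Hb.
Qed.

Lemma shuffle_pmap_lift (u v : seq T) (s : seq A) :
  shuffle (pmap g u) (pmap g v) s -> exists2 c, shuffle u v c & pmap g c = s.
Proof.
move Eu: (pmap g u) => u'; move Ev: (pmap g v) => v' H.
elim: H u v Eu Ev => [|x {}u' {}v' {}s _ IH|y {}u' {}v' {}s _ IH] u v Eu Ev.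
- by exists (u ++ v); [exact: shuffle_cat | rewrite pmap_cat Eu Ev].
- have [u1 [a [u2 [-> Hu1 Ha Hu2]]]] := pmap_eq_cons Eu.
  have [c Hc <-] := IH _ _ Hu2 Ev.
  exists (u1 ++ a :: c); first exact/shuffle_catl/shuffle_l.
  by rewrite pmap_cat Hu1 /= Ha.
- have [v1 [b [v2 [-> Hv1 Hb Hv2]]]] := pmap_eq_cons Ev.
  have [c Hc <-] := IH _ _ Eu Hv2.
  exists (v1 ++ b :: c); first exact/shuffle_catr/shuffle_r.
  by rewrite pmap_cat Hv1 /= Hb.
Qed.

End Shuffle.

Definition peer_action (Msg : Type) (src dst : Msg -> nat) (i : nat) (a : Msg)
  : option (action Msg) :=
  if src a == i then Some (Snd a) else if dst a == i then Some (Rcv a) else None.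

Lemma proj_sndrcv (Msg : Type) (src dst : Msg -> nat) (i : nat) (w : seq Msg) :
  (forall a, src a <> dst a) ->
  proj src dst i (sndrcv w) = pmap (peer_action src dst i) w.
Proof.
move=> src_neq_dst; elim: w => [|a w IH] //=.
rewrite /proj /= -/(proj src dst i (sndrcv w)) IH /peer_action.
case: eqP => [Hs|_]; case: eqP => [Hd|_] //.
by case: (src_neq_dst a); rewrite Hs Hd.
Qed.

Theorem lemma4p8 (Msg : finType) (N : nat) (src dst : Msg -> nat)
  (HM : msgset N src dst) (u v : seq Msg) (tau : seq (action Msg))
  (Htau : shuffle (sndrcv u) (sndrcv v) tau) :
  forall i : nat, 1 <= i <= N ->
  exists c : seq Msg, shuffle u v c /\
    proj src dst i tau = proj src dst i (sndrcv c).
Proof.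
move=> i _.
have src_neq_dst a : src a <> dst a by case: HM => _ /(_ a) [].
have Hproj : shuffle (proj src dst i (sndrcv u)) (proj src dst i (sndrcv v))
                     (proj src dst i tau) := shuffle_filter _ Htau.
rewrite !proj_sndrcv // in Hproj.
have [c Hc Hpc] := shuffle_pmap_lift Hproj.
by exists c; rewrite proj_sndrcv // Hpc.
Qed.
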